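(* Let $\mathcal R$ be the compositum of all real quadratic integer rings $\mathcal O_{\mathbb{Q}(\sqrt{d})}$ ($d>1$ squarefree). Let $A=(a_{uv})$ be an $n\times n$ symmetric $\mathcal R$-matrix, and suppose that for some index $v$ one has $d_v:=\sum_{u=1}^n a_{uv}^2>4$. Then $A\notin\mathfrak S'_n$.
   Context: For a symmetric $\mathcal R$-matrix $A$, let $L_A$ denote the smallest normal extension of $\mathbb{Q}$ containing all entries of $A$. $\mathfrak S'_n$ denotes the set of $n\times n$ symmetric $\mathcal R$-matrices $A$ such that for every $\sigma\in\operatorname{Gal}(L_A/\mathbb{Q})$, all eigenvalues of $\sigma(A)$ (with $\sigma$ applied entrywise) lie in the interval $[-2,2]$. *)

From mathcomp Require Import all_boot all_order all_algebra all_field.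
Set Implicit Arguments. Unset Strict Implicit. Unset Printing Implicit Defensive.
Import Order.TTheory GRing.Theory Num.Theory.
Local Open Scope ring_scope.

Definition sqfree (d : nat) : Prop := forall p : nat, prime p -> ~~ (p * p %| d)%N.

Definition quadInt (d : nat) (x : algC) : Prop :=
  x \in Aint /\ exists p q : rat, x = ratr p + ratr q * sqrtC d%:R.

(* The compositum R of all real quadratic integer rings O_{Q(sqrt d)},
   d > 1 squarefree: the smallest subring of algC containing them all. *)
Inductive inR : algC -> Prop :=
  | inR_quad (d : nat) (x : algC) : (1 < d)%N -> sqfree d -> quadInt d x -> inR x
  | inR_1 : inR 1
  | inR_opp x : inR x -> inR (- x)
  | inR_add x y : inR x -> inR y -> inR (x + y)
  | inR_mul x y : inR x -> inR y -> inR (x * y).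

Definition symR_mx (n : nat) (A : 'M[algC]_n) : Prop :=
  A^T = A /\ forall i j, inR (A i j).

(* S'_n: symmetric R-matrices all of whose Galois conjugates have spectrum
   in [-2, 2].  Galois conjugation over Q of the entries is expressed by
   the (ring) automorphisms of algC. *)
Definition Sprime (n : nat) (A : 'M[algC]_n) : Prop :=
  symR_mx A /\
  forall (sigma : {rmorphism algC -> algC}) (lambda : algC),
    eigenvalue (map_mx sigma A) lambda -> (-2 <= lambda) && (lambda <= 2).

From mathcomp Require Import all_boot all_order all_algebra all_field.
From mathcomp Require Import ring.
Import Order.TTheory GRing.Theory Num.Theory.
Local Open Scope ring_scope.
Local Open Scope sesquilinear_scope.

(* Every element of R is real, so A is a real symmetric matrix and the Galois
   condition for the identity automorphism already puts its spectrum in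
   [-2, 2].  Diagonalising A by a unitary P, the v-th diagonal entry of
   A A^T equals sum_k |P_kv|^2 lambda_k^2, a convex combination of the
   squared eigenvalues, hence at most 4; but it is d_v > 4. *)

Section NormalSpectrum.
Context {C : numClosedFieldType} {n : nat}.
Implicit Types (A P : 'M[C]_n).

Lemma unitarymx_col_norm P i : P \is unitarymx -> \sum_k `|P k i| ^+ 2 = 1.
Proof.
rewrite -trmxC_unitary => /unitarymxP /(congr1 (fun M : 'M[C]_n => M i i)).
rewrite trmxCK !mxE eqxx; apply: etrans; apply: eq_bigr => k _.
by rewrite !mxE normCK mulrC.
Qed.

Lemma row_unit_neq0 P k : P \in unitmx -> row k P != 0.
Proof.
move=> Punit; apply/eqP => /(congr1 (mulmx^~ (invmx P))).
rewrite -row_mul mulmxV // mul0mx => /rowP /(_ k).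
by rewrite !mxE eqxx; apply/eqP; rewrite oner_eq0.
Qed.

Lemma spectral_diag_eigenvalue A k :
  A \is normalmx -> eigenvalue A (spectral_diag A 0 k).
Proof.
move=> /orthomx_spectralP eqA; have Punit := spectral_unit A.
apply/eigenvalueP; exists (row k (spectralmx A)); last exact: row_unit_neq0.
rewrite [in X in _ *m X = _]eqA !mulmxA -row_mul mulmxV // -row_mul mul1mx.
by rewrite row_diag_mx -scalemxAl -rowE.
Qed.

Lemma normalmx_mul_tr_diag A i : A \is normalmx ->
  (A *m A^t*) i i =
  \sum_k `|spectralmx A k i| ^+ 2 * `|spectral_diag A 0 k| ^+ 2.
Proof.
move=> /orthomx_spectralP eqA; have Pu := spectral_unitarymx A.
rewrite [in LHS]eqA invmx_unitary // !trmx_mul !map_mxM trmxCK tr_diag_mx.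
rewrite map_diag_mx -!mulmxA (mulmxA (spectralmx A)) (unitarymxP _) // mul1mx.
rewrite (mulmxA (diag_mx _)) mulmx_diag mul_diag_mx mxE; apply: eq_bigr => k _.
rewrite !mxE !normCK; ring.
Qed.

Lemma normalmx_mul_tr_diag_le A (r : C) i :
  A \is normalmx -> 0 <= r -> (forall a, eigenvalue A a -> `|a| <= r) ->
  (A *m A^t*) i i <= r ^+ 2.
Proof.
move=> Anormal r0 eigA; rewrite normalmx_mul_tr_diag //.
rewrite -[X in _ <= X]mul1r -(unitarymx_col_norm _ i (spectral_unitarymx A)).
rewrite mulr_suml; apply: ler_sum => k _; apply: ler_wpM2l; first exact: exprn_ge0.
by rewrite lerXn2r ?nnegrE ?eigA ?spectral_diag_eigenvalue.
Qed.

Lemma realsym_mul_diag A i : A^T = A -> A \is a realmx ->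
  (A *m A^t*) i i = \sum_u A u i ^+ 2.
Proof.
move=> Asym Areal; rewrite -map_trmx realmxC // Asym mxE.
by apply: eq_bigr => u _; rewrite -[in A i u]Asym mxE expr2.
Qed.

End NormalSpectrum.

Lemma inR_real x : inR x -> x \is Num.real.
Proof.
elim=> {x} [d x _ _ [_ [p [q ->]]]| | x _| x y _ + _ | x y _ + _].
- have ratr_real (r : rat) : ratr r \is @Num.real algC.
    by apply: Creal_Crat; apply: Crat_rat.
  have sqrt_real : sqrtC d%:R \is @Num.real algC by rewrite sqrtC_real ?ler0n.
  by apply: realD; last apply: realM.
- exact: real1.
- by rewrite realN.
- exact: realD.
- exact: realM.
Qed.

Theorem lemma2 (n : nat) (A : 'M[algC]_n) (v : 'I_n) :
  symR_mx A -> 4 < \sum_(u < n) A u v ^+ 2 -> ~ Sprime A.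
Proof.
move=> [Asym inR_A] dv_gt4 [_ spectrum_A].
have Areal : A \is a realmx by apply/mxOverP=> i j; apply: inR_real.
have Anormal : A \is normalmx.
  apply/hermitian_normalmx/realsym_hermsym => //.
  by apply/is_hermitianmxP; rewrite expr0 scale1r map_mx_id.
have eigA a : eigenvalue A a -> `|a| <= 2.
  move=> eig_a; have /andP[a_ge a_le] : -2 <= a <= 2.
    by apply: (spectrum_A idfun); rewrite map_mx_id.
  by rewrite real_ler_norml ?a_ge ?a_le // (ler_real a_le) realn.
have := normalmx_mul_tr_diag_le _ _ v Anormal (ler0n _ 2) eigA.
by rewrite realsym_mul_diag // -natrX => /(lt_le_trans dv_gt4); rewrite ltxx.
Qed.
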